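(* Suppose the weights $w^{(1)},w^{(2)}:\mathbb N_0\to\mathbb C$ satisfy the discrete Pearson equations $\theta(k+1)w^{(a)}(k+1)=\sigma^{(a)}(k)w^{(a)}(k)$ for all $k\in\mathbb N_0$ and $a\in\{1,2\}$, where $\theta,\sigma^{(1)},\sigma^{(2)}$ are polynomials with $\theta(0)=0$. Then the moment matrix satisfies \[ \theta(\Lambda)\mathscr M=L\,\mathscr M\left(L^{(1)}\sigma^{(1)}(\Lambda^{(1)})+L^{(2)}\sigma^{(2)}(\Lambda^{(2)})\right)^\top. \]
   Context: Let $X(x)=(1,x,x^2,\dots)^\top$, $X^{(1)}(x)=(1,0,x,0,x^2,0,\dots)^\top$, $X^{(2)}(x)=(0,1,0,x,0,x^2,\dots)^\top$. The moment matrix is the semi-infinite matrix $\mathscr M=\sum_{k=0}^\infty X(k)\big(w^{(1)}(k)X^{(1)}(k)+w^{(2)}(k)X^{(2)}(k)\big)^\top$ (all series assumed absolutely convergent). $\Lambda$ is the semi-infinite matrix with ones on the first superdiagonal and zeros elsewhere; $I^{(1)}=\operatorname{diag}(1,0,1,0,\dots)$, $I^{(2)}=\operatorname{diag}(0,1,0,1,\dots)$, $\Lambda^{(a)}=\Lambda^2I^{(a)}$. $L$ is the lower triangular Pascal matrix, $L_{n,m}=\binom nm$ for $n\ge m$ and $0$ otherwise (indices from $0$). For $a\in\{1,2\}$, $L^{(a)}$ is the semi-infinite matrix whose only nonzero entries are $L^{(a)}_{2n+a-1,2m+a-1}=\binom nm$ for $n\ge m\ge0$. *)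

From Stdlib Require Import Reals List Bool.
From Coquelicot Require Import Coquelicot.
Import ListNotations.
Open Scope C_scope.
Open Scope bool_scope.

(* Sum of a complex series (real and imaginary parts summed separately);
   equal to the usual sum whenever the series converges. *)
Definition csum (a : nat -> C) : C :=
  (Series (fun k => Re (a k)), Series (fun k => Im (a k))).

Fixpoint cpow (x : C) (n : nat) : C :=
  match n with O => 1 | S n => x * cpow x n end.

(* polynomials with complex coefficients as coefficient lists [c0; c1; ...] *)
Definition cpoly := list C.
Fixpoint peval (p : cpoly) (x : C) : C :=
  match p with [] => 0 | c :: q => c + x * peval q x end.

(* semi-infinite matrices, indices from 0 *)
Definition smat := nat -> nat -> C.
Definition smul (A B : smat) : smat := fun n m => csum (fun j => A n j * B j m).
Definition sadd (A B : smat) : smat := fun n m => A n m + B n m.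
Definition sscale (c : C) (A : smat) : smat := fun n m => c * A n m.
Definition strans (A : smat) : smat := fun n m => A m n.
Definition sid : smat := fun n m => if Nat.eqb n m then 1 else 0.
Definition szero : smat := fun _ _ => 0.
Fixpoint spow (A : smat) (k : nat) : smat :=
  match k with O => sid | S k => smul A (spow A k) end.
Fixpoint speval_aux (p : cpoly) (A : smat) (i : nat) : smat :=
  match p with [] => szero | c :: q => sadd (sscale c (spow A i)) (speval_aux q A (S i)) end.
Definition speval (p : cpoly) (A : smat) : smat := speval_aux p A 0.

Definition Xv (x : C) (n : nat) : C := cpow x n.
Definition X1v (x : C) (n : nat) : C := if Nat.even n then cpow x (Nat.div2 n) else 0.
Definition X2v (x : C) (n : nat) : C := if Nat.even n then 0 else cpow x (Nat.div2 n).

Definition natC (k : nat) : C := RtoC (INR k).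

Definition moment_term (w1 w2 : nat -> C) (n m k : nat) : C :=
  Xv (natC k) n * (w1 k * X1v (natC k) m + w2 k * X2v (natC k) m).
Definition moment (w1 w2 : nat -> C) : smat :=
  fun n m => csum (moment_term w1 w2 n m).

Definition Lam : smat := fun n m => if Nat.eqb m (S n) then 1 else 0.
Definition I1 : smat := fun n m => if Nat.eqb n m && Nat.even n then 1 else 0.
Definition I2 : smat := fun n m => if Nat.eqb n m && negb (Nat.even n) then 1 else 0.
Definition Lam1 : smat := smul (spow Lam 2) I1.
Definition Lam2 : smat := smul (spow Lam 2) I2.

Definition binC (n m : nat) : C := RtoC (Binomial.C n m).
Definition Pascal : smat := fun n m => if Nat.leb m n then binC n m else 0.
Definition Pascal1 : smat := fun i j =>
  if Nat.even i && Nat.even j && Nat.leb j i then binC (Nat.div2 i) (Nat.div2 j) else 0.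
Definition Pascal2 : smat := fun i j =>
  if negb (Nat.even i) && negb (Nat.even j) && Nat.leb j i
  then binC (Nat.div2 i) (Nat.div2 j) else 0.

From Stdlib Require Import Reals Lia FunctionalExtensionality.
From Coquelicot Require Import Coquelicot.
Open Scope C_scope.

(* The moment matrix is the series of rank-one matrices sum_k X(k) w_k^T with
   w_k = w1(k) X1(k) + w2(k) X2(k), and every matrix multiplying it in the
   statement is upper banded (row n vanishes beyond column n + c), so it acts
   on the series term by term through finite sums.  On these vectors
   Lambda X(x) = x X(x), Lambda^(a) X^(b)(x) = [a = b] x X^(b)(x),
   L X(x) = X(x+1) (binomial theorem) and L^(a) X^(b)(x) = [a = b] X^(b)(x+1).
   Hence theta(Lambda) M = sum_k theta(k) X(k) w_k^T, while the right-hand side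
   is sum_k X(k+1) (sigma1(k) w1(k) X1(k+1) + sigma2(k) w2(k) X2(k+1))^T, which
   the Pearson equations turn into sum_k theta(k+1) X(k+1) w_(k+1)^T: the left
   side with its k = 0 term removed, and that term vanishes since theta(0) = 0. *)

Implicit Types (a b u v : nat -> C) (A B : smat).

(** * Finite sums *)

Fixpoint fsum (a : nat -> C) (N : nat) : C :=
  match N with O => 0 | S N => fsum a N + a N end.

Lemma fsum_ext a b N : (forall j, (j < N)%nat -> a j = b j) -> fsum a N = fsum b N.
Proof.
  induction N as [|N IH]; intros H; simpl; auto.
  rewrite IH, H by (intros; try apply H; lia). reflexivity.
Qed.

Lemma fsum_plus a b N : fsum (fun j => a j + b j) N = fsum a N + fsum b N.
Proof. induction N as [|N IH]; simpl; [ring | rewrite IH; ring]. Qed.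

Lemma fsum_scal_l c a N : fsum (fun j => c * a j) N = c * fsum a N.
Proof. induction N as [|N IH]; simpl; [ring | rewrite IH; ring]. Qed.

Lemma fsum_scal_r c a N : fsum (fun j => a j * c) N = fsum a N * c.
Proof. induction N as [|N IH]; simpl; [ring | rewrite IH; ring]. Qed.

Lemma fsum_zero a N : (forall j, (j < N)%nat -> a j = 0) -> fsum a N = 0.
Proof.
  induction N as [|N IH]; intros H; simpl; auto.
  rewrite IH, H by (intros; try apply H; lia). ring.
Qed.

Lemma fsum_incr_1 a N : fsum a (S N) = a 0%nat + fsum (fun j => a (S j)) N.
Proof.
  induction N as [|N IH]; [simpl; ring |].
  change (fsum a (S (S N))) with (fsum a (S N) + a (S N)). rewrite IH. simpl. ring.
Qed.

Lemma fsum_eventually a N M :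
  (forall j, (N <= j)%nat -> a j = 0) -> (N <= M)%nat -> fsum a M = fsum a N.
Proof. intros H HM. induction HM as [|M HM IH]; simpl; auto. rewrite IH, H by lia. ring. Qed.

Lemma fsum_single a N i :
  (i < N)%nat -> (forall j, j <> i -> a j = 0) -> fsum a N = a i.
Proof.
  intros Hi H. rewrite (fsum_eventually a (S i) N) by (intros; try apply H; lia).
  simpl. rewrite fsum_zero by (intros; apply H; lia). ring.
Qed.

Lemma fsum_double a M :
  fsum a (2 * M) = fsum (fun t => a (2 * t)%nat + a (2 * t + 1)%nat) M.
Proof.
  induction M as [|M IH]; auto.
  replace (2 * S M)%nat with (S (S (2 * M))) by lia.
  change (fsum a (2 * M) + a (2 * M)%nat + a (S (2 * M)) =
          fsum (fun t => a (2 * t)%nat + a (2 * t + 1)%nat) M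
          + (a (2 * M)%nat + a (2 * M + 1)%nat)).
  rewrite IH.
  replace (2 * M + 1)%nat with (S (2 * M)) by lia. ring.
Qed.

(** * Complex series *)

Definition ex_csum (a : nat -> C) : Prop :=
  ex_series (fun k => Re (a k)) /\ ex_series (fun k => Im (a k)).

Lemma ex_csum_Cmod a : ex_series (fun k => Cmod (a k)) -> ex_csum a.
Proof.
  intros H. split; apply (@ex_series_le R_AbsRing R_CompleteNormedModule _ (fun k => Cmod (a k)));
    auto; intros k.
  - apply re_le_Cmod.
  - eapply Rle_trans; [apply Rmax_r | apply Rmax_Cmod].
Qed.

Lemma ex_csum_ext a b : (forall k, a k = b k) -> ex_csum a -> ex_csum b.
Proof.
  intros H [Hre Him].
  split; [eapply ex_series_ext, Hre | eapply ex_series_ext, Him]; intros k; simpl; rewrite H; auto.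
Qed.

Lemma ex_csum_plus a b : ex_csum a -> ex_csum b -> ex_csum (fun k => a k + b k).
Proof.
  intros [Ha1 Ha2] [Hb1 Hb2].
  split; apply (ex_series_plus (V := R_NormedModule)); assumption.
Qed.

Lemma ex_csum_scal_l c a : ex_csum a -> ex_csum (fun k => c * a k).
Proof.
  intros [Hre Him]. split; simpl.
  - apply (ex_series_minus (V := R_NormedModule)
             (fun k => Re c * Re (a k))%R (fun k => Im c * Im (a k))%R);
      apply (ex_series_scal_l (V := R_NormedModule)); assumption.
  - apply (ex_series_plus (V := R_NormedModule)
             (fun k => Re c * Im (a k))%R (fun k => Im c * Re (a k))%R);
      apply (ex_series_scal_l (V := R_NormedModule)); assumption.
Qed.

Lemma csum_ext a b : (forall k, a k = b k) -> csum a = csum b.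
Proof. intros H. unfold csum. f_equal; apply Series_ext; intros k; rewrite H; reflexivity. Qed.

Lemma csum_plus a b : ex_csum a -> ex_csum b -> csum (fun k => a k + b k) = csum a + csum b.
Proof.
  intros [Ha1 Ha2] [Hb1 Hb2]. unfold csum, Cplus. simpl. f_equal.
  - apply (Series_plus (fun k => Re (a k)) (fun k => Re (b k))); assumption.
  - apply (Series_plus (fun k => Im (a k)) (fun k => Im (b k))); assumption.
Qed.

Lemma csum_scal_l c a : ex_csum a -> csum (fun k => c * a k) = c * csum a.
Proof.
  intros [Hre Him]. unfold csum, Cmult. simpl.
  rewrite (Series_minus (fun k => fst c * fst (a k))%R (fun k => snd c * snd (a k))%R),
          (Series_plus (fun k => fst c * snd (a k))%R (fun k => snd c * fst (a k))%R)
    by (apply (ex_series_scal_l (V := R_NormedModule)); assumption).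
  rewrite !Series_scal_l. reflexivity.
Qed.

Lemma csum_incr_1 a : ex_csum a -> csum a = a 0%nat + csum (fun k => a (S k)).
Proof.
  intros [Hre Him]. unfold csum. rewrite (Series_incr_1 _ Hre), (Series_incr_1 _ Him). reflexivity.
Qed.

Lemma is_series_eventually (u : nat -> R) N l :
  (forall n, (N <= n)%nat -> sum_n u n = l) -> is_series u l.
Proof.
  intros H. apply (filterlim_ext_loc (fun _ => l)); [exists N; intros; symmetry; auto |].
  apply filterlim_const.
Qed.

Lemma is_series_Re_Im_fin a N :
  (forall j, (N <= j)%nat -> a j = 0) ->
  is_series (fun k => Re (a k)) (Re (fsum a N)) /\ is_series (fun k => Im (a k)) (Im (fsum a N)).
Proof.
  intros H.
  assert (Hsum : forall n, sum_n (fun k => Re (a k)) n = Re (fsum a (S n))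
                        /\ sum_n (fun k => Im (a k)) n = Im (fsum a (S n))).
  { induction n as [|n [IHre IHim]]; rewrite ?sum_O, ?sum_Sn, ?IHre, ?IHim; simpl; split; auto;
      unfold Re, Im; ring. }
  split; apply (is_series_eventually _ N); intros n Hn;
    rewrite (proj1 (Hsum n)) || rewrite (proj2 (Hsum n)); rewrite (fsum_eventually a N (S n)); auto.
Qed.

Lemma csum_fin a N : (forall j, (N <= j)%nat -> a j = 0) -> csum a = fsum a N.
Proof.
  intros H. destruct (is_series_Re_Im_fin a N H) as [Hre Him].
  unfold csum. rewrite (is_series_unique _ _ Hre), (is_series_unique _ _ Him).
  destruct (fsum a N); reflexivity.
Qed.

Lemma ex_csum_fin a N : (forall j, (N <= j)%nat -> a j = 0) -> ex_csum a.
Proof.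
  intros H. destruct (is_series_Re_Im_fin a N H) as [Hre Him]. split; eexists; eassumption.
Qed.

Lemma ex_csum_fsum (f : nat -> nat -> C) N :
  (forall i, ex_csum (f i)) -> ex_csum (fun k => fsum (fun i => f i k) N).
Proof.
  intros H. induction N as [|N IH]; simpl.
  - apply (ex_csum_fin _ 0). reflexivity.
  - apply ex_csum_plus; auto.
Qed.

Lemma csum_fsum (f : nat -> nat -> C) N :
  (forall i, ex_csum (f i)) ->
  csum (fun k => fsum (fun i => f i k) N) = fsum (fun i => csum (f i)) N.
Proof.
  intros H. induction N as [|N IH]; simpl.
  - apply (csum_fin _ 0). reflexivity.
  - rewrite csum_plus, IH; auto. apply ex_csum_fsum; auto.
Qed.

Lemma csum_fsum_scal (a : nat -> C) (f : nat -> nat -> C) N :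
  (forall j, ex_csum (f j)) ->
  fsum (fun j => a j * csum (f j)) N = csum (fun k => fsum (fun j => a j * f j k) N).
Proof.
  intros H. rewrite (csum_fsum (fun j k => a j * f j k)) by (intros; apply ex_csum_scal_l; auto).
  apply fsum_ext. intros j _. symmetry. apply csum_scal_l. auto.
Qed.

(** * Upper-banded matrices acting on vectors *)

Definition upper_banded (A : smat) : Prop :=
  exists c, forall n j, (n + c < j)%nat -> A n j = 0.

Definition smulv (A : smat) (v : nat -> C) (n : nat) : C := csum (fun j => A n j * v j).

Lemma upper_banded_sadd A B : upper_banded A -> upper_banded B -> upper_banded (sadd A B).
Proof.
  intros [a HA] [b HB]. exists (a + b)%nat. intros n j Hj. unfold sadd.
  rewrite HA, HB by lia. ring.
Qed.

Lemma upper_banded_sscale c A : upper_banded A -> upper_banded (sscale c A).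
Proof. intros [a HA]. exists a. intros n j Hj. unfold sscale. rewrite HA by lia. ring. Qed.

Lemma upper_banded_szero : upper_banded szero.
Proof. exists 0%nat. reflexivity. Qed.

Lemma upper_banded_sid : upper_banded sid.
Proof.
  exists 0%nat. intros n j Hj. unfold sid. destruct (Nat.eqb_spec n j); [lia | reflexivity].
Qed.

Lemma upper_banded_smul A B : upper_banded A -> upper_banded B -> upper_banded (smul A B).
Proof.
  intros [a HA] [b HB]. exists (a + b)%nat. intros n m Hm. unfold smul.
  rewrite (csum_fin _ (n + a + 1)) by (intros j Hj; rewrite HA by lia; ring).
  apply fsum_zero. intros j Hj. rewrite HB by lia. ring.
Qed.

Lemma smulv_fsum A v n N :
  (forall j, (N <= j)%nat -> A n j = 0) -> smulv A v n = fsum (fun j => A n j * v j) N.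
Proof. intros H. apply csum_fin. intros j Hj. rewrite H by assumption. ring. Qed.

Lemma ex_csum_row A v n : upper_banded A -> ex_csum (fun j => A n j * v j).
Proof. intros [a HA]. apply (ex_csum_fin _ (n + a + 1)). intros j Hj. rewrite HA by lia. ring. Qed.

Lemma smulv_single A v n i : (forall j, j <> i -> A n j = 0) -> smulv A v n = A n i * v i.
Proof.
  intros H. rewrite (smulv_fsum A v n (S i)) by (intros; apply H; lia).
  apply (fsum_single (fun j => A n j * v j)); [lia |]. intros j Hj. rewrite H by assumption. ring.
Qed.

Lemma smulv_ext A u v n : (forall j, u j = v j) -> smulv A u n = smulv A v n.
Proof. intros H. apply csum_ext. intros j. rewrite H. reflexivity. Qed.

Lemma smulv_zero_r A n : smulv A (fun _ => 0) n = 0.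
Proof.
  unfold smulv. rewrite (csum_ext _ (fun _ => 0)) by (intros; ring).
  apply (csum_fin _ 0). reflexivity.
Qed.

Lemma smulv_lin A c1 c2 u v n : upper_banded A ->
  smulv A (fun j => c1 * u j + c2 * v j) n = c1 * smulv A u n + c2 * smulv A v n.
Proof.
  intros [a HA]. rewrite !(smulv_fsum A _ n (n + a + 1)) by (intros; apply HA; lia).
  rewrite <- !fsum_scal_l, <- fsum_plus. apply fsum_ext. intros; ring.
Qed.

Lemma smulv_scal A c v n : upper_banded A -> smulv A (fun j => c * v j) n = c * smulv A v n.
Proof.
  intros [a HA]. rewrite !(smulv_fsum A _ n (n + a + 1)) by (intros; apply HA; lia).
  rewrite <- fsum_scal_l. apply fsum_ext. intros; ring.
Qed.

Lemma smulv_sadd A B v n : upper_banded A -> upper_banded B ->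
  smulv (sadd A B) v n = smulv A v n + smulv B v n.
Proof.
  intros [a HA] [b HB]. set (N := (n + a + b + 1)%nat).
  rewrite (smulv_fsum (sadd A B) v n N), (smulv_fsum A v n N), (smulv_fsum B v n N)
    by (intros; unfold sadd; rewrite ?HA, ?HB by lia; ring).
  rewrite <- fsum_plus. apply fsum_ext. intros; unfold sadd; ring.
Qed.

Lemma smulv_sscale c A v n : upper_banded A -> smulv (sscale c A) v n = c * smulv A v n.
Proof.
  intros [a HA]. set (N := (n + a + 1)%nat).
  rewrite (smulv_fsum (sscale c A) v n N), (smulv_fsum A v n N)
    by (intros; unfold sscale; rewrite ?HA by lia; ring).
  rewrite <- fsum_scal_l. apply fsum_ext. intros; unfold sscale; ring.
Qed.

Lemma smulv_sid v n : smulv sid v n = v n.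
Proof.
  rewrite (smulv_single sid v n n); unfold sid.
  - rewrite Nat.eqb_refl. ring.
  - intros j Hj. apply Nat.eqb_neq in Hj. rewrite Nat.eqb_sym, Hj. reflexivity.
Qed.

Lemma smulv_szero v n : smulv szero v n = 0.
Proof. rewrite (smulv_single szero v n 0) by reflexivity. unfold szero. ring. Qed.

Lemma smulv_smul A B v n : upper_banded A -> upper_banded B ->
  smulv (smul A B) v n = smulv A (smulv B v) n.
Proof.
  intros [a HA] HB. set (N := (n + a + 1)%nat).
  assert (HAn : forall j, (N <= j)%nat -> A n j = 0) by (intros; apply HA; lia).
  rewrite (smulv_fsum A _ n N HAn). unfold smulv at 2.
  rewrite csum_fsum_scal by (intros; apply ex_csum_row; assumption).
  apply csum_ext. intros m. unfold smul.
  rewrite (csum_fin _ N) by (intros j Hj; rewrite HAn by lia; ring).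
  rewrite <- fsum_scal_r. apply fsum_ext. intros; ring.
Qed.

Lemma upper_banded_spow A i : upper_banded A -> upper_banded (spow A i).
Proof.
  intros HA. induction i as [|i IH]; simpl.
  - apply upper_banded_sid.
  - apply upper_banded_smul; assumption.
Qed.

Lemma upper_banded_speval_aux p A i : upper_banded A -> upper_banded (speval_aux p A i).
Proof.
  intros HA. revert i. induction p as [|c p IH]; intros i; simpl.
  - apply upper_banded_szero.
  - apply upper_banded_sadd; [apply upper_banded_sscale, upper_banded_spow |]; auto.
Qed.

Lemma upper_banded_speval p A : upper_banded A -> upper_banded (speval p A).
Proof. apply upper_banded_speval_aux. Qed.

Section Eigenvector.

Variables (A : smat) (v : nat -> C) (lam : C).
Hypothesis (HA : upper_banded A) (Hv : forall n, smulv A v n = lam * v n).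

Lemma smulv_spow_eigen i n : smulv (spow A i) v n = cpow lam i * v n.
Proof.
  revert n. induction i as [|i IH]; intros n; simpl.
  - rewrite smulv_sid. ring.
  - rewrite smulv_smul, (smulv_ext _ _ (fun j => cpow lam i * v j)), smulv_scal, Hv
      by (auto using upper_banded_spow). ring.
Qed.

Lemma smulv_speval_aux_eigen p i n :
  smulv (speval_aux p A i) v n = cpow lam i * peval p lam * v n.
Proof.
  revert i. induction p as [|c p IH]; intros i; simpl.
  - rewrite smulv_szero. ring.
  - rewrite smulv_sadd, smulv_sscale, smulv_spow_eigen, IH
      by (auto using upper_banded_sscale, upper_banded_spow, upper_banded_speval_aux).
    simpl. ring.
Qed.

Lemma smulv_speval_eigen p n : smulv (speval p A) v n = peval p lam * v n.
Proof. unfold speval. rewrite smulv_speval_aux_eigen. simpl. ring. Qed.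

End Eigenvector.

(** * The shift matrices *)

Lemma upper_banded_Lam : upper_banded Lam.
Proof.
  exists 1%nat. intros n j Hj. unfold Lam. destruct (Nat.eqb_spec j (S n)); [lia | reflexivity].
Qed.

Lemma smulv_Lam v n : smulv Lam v n = v (S n).
Proof.
  rewrite (smulv_single Lam v n (S n)); unfold Lam.
  - rewrite Nat.eqb_refl. ring.
  - intros j Hj. apply Nat.eqb_neq in Hj. rewrite Hj. reflexivity.
Qed.

Lemma smulv_Lam_Xv x n : smulv Lam (Xv x) n = x * Xv x n.
Proof. apply smulv_Lam. Qed.

Lemma smulv_I1 v n : smulv I1 v n = if Nat.even n then v n else 0.
Proof.
  rewrite (smulv_single I1 v n n); unfold I1.
  - rewrite Nat.eqb_refl. destruct (Nat.even n); simpl; ring.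
  - intros j Hj. apply not_eq_sym, Nat.eqb_neq in Hj. rewrite Hj. reflexivity.
Qed.

Lemma smulv_I2 v n : smulv I2 v n = if Nat.even n then 0 else v n.
Proof.
  rewrite (smulv_single I2 v n n); unfold I2.
  - rewrite Nat.eqb_refl. destruct (Nat.even n); simpl; ring.
  - intros j Hj. apply not_eq_sym, Nat.eqb_neq in Hj. rewrite Hj. reflexivity.
Qed.

Lemma upper_banded_I1 : upper_banded I1.
Proof.
  exists 0%nat. intros n j Hj. unfold I1. destruct (Nat.eqb_spec n j); [lia | reflexivity].
Qed.

Lemma upper_banded_I2 : upper_banded I2.
Proof.
  exists 0%nat. intros n j Hj. unfold I2. destruct (Nat.eqb_spec n j); [lia | reflexivity].
Qed.

Lemma upper_banded_Lam1 : upper_banded Lam1.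
Proof.
  unfold Lam1. auto using upper_banded_smul, upper_banded_spow, upper_banded_Lam, upper_banded_I1.
Qed.

Lemma upper_banded_Lam2 : upper_banded Lam2.
Proof.
  unfold Lam2. auto using upper_banded_smul, upper_banded_spow, upper_banded_Lam, upper_banded_I2.
Qed.

Lemma smulv_Lam_sq v n : smulv (spow Lam 2) v n = v (S (S n)).
Proof.
  simpl. rewrite smulv_smul, smulv_Lam, smulv_smul, smulv_Lam, smulv_sid;
    auto using upper_banded_Lam, upper_banded_sid, upper_banded_smul.
Qed.

Lemma smulv_Lam1 v n : smulv Lam1 v n = if Nat.even n then v (S (S n)) else 0.
Proof.
  unfold Lam1. rewrite smulv_smul, smulv_Lam_sq, smulv_I1;
    auto using upper_banded_spow, upper_banded_Lam, upper_banded_I1.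
Qed.

Lemma smulv_Lam2 v n : smulv Lam2 v n = if Nat.even n then 0 else v (S (S n)).
Proof.
  unfold Lam2. rewrite smulv_smul, smulv_Lam_sq, smulv_I2;
    auto using upper_banded_spow, upper_banded_Lam, upper_banded_I2.
Qed.

Lemma X1v_SS x n : X1v x (S (S n)) = x * X1v x n.
Proof. unfold X1v. simpl. destruct (Nat.even n); simpl; ring. Qed.

Lemma X2v_SS x n : X2v x (S (S n)) = x * X2v x n.
Proof. unfold X2v. simpl. destruct (Nat.even n); simpl; ring. Qed.

Lemma smulv_Lam1_X1v x n : smulv Lam1 (X1v x) n = x * X1v x n.
Proof. rewrite smulv_Lam1, X1v_SS. unfold X1v. destruct (Nat.even n); ring. Qed.

Lemma smulv_Lam1_X2v x n : smulv Lam1 (X2v x) n = 0.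
Proof. rewrite smulv_Lam1, X2v_SS. unfold X2v. destruct (Nat.even n); ring. Qed.

Lemma smulv_Lam2_X1v x n : smulv Lam2 (X1v x) n = 0.
Proof. rewrite smulv_Lam2, X1v_SS. unfold X1v. destruct (Nat.even n); ring. Qed.

Lemma smulv_Lam2_X2v x n : smulv Lam2 (X2v x) n = x * X2v x n.
Proof. rewrite smulv_Lam2, X2v_SS. unfold X2v. destruct (Nat.even n); ring. Qed.

(** * The Pascal matrices *)

Lemma Pascal_above n j : (n < j)%nat -> Pascal n j = 0.
Proof. intros Hnj. unfold Pascal. rewrite (proj2 (Nat.leb_gt j n)) by lia. reflexivity. Qed.

Lemma upper_banded_Pascal : upper_banded Pascal.
Proof. exists 0%nat. intros n j Hj. apply Pascal_above. lia. Qed.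

Lemma Pascal_0 n : Pascal n 0%nat = 1.
Proof. unfold Pascal, binC. simpl. rewrite C_n_0. reflexivity. Qed.

Lemma Pascal_succ n j : Pascal (S n) (S j) = Pascal n j + Pascal n (S j).
Proof.
  unfold Pascal, binC. change (S j <=? S n)%nat with (j <=? n)%nat.
  destruct (Nat.lt_total j n) as [Hlt | [-> | Hgt]].
  - rewrite (proj2 (Nat.leb_le j n)), (proj2 (Nat.leb_le (S j) n)) by lia.
    rewrite <- pascal, RtoC_plus by assumption. reflexivity.
  - rewrite Nat.leb_refl, (proj2 (Nat.leb_gt (S n) n)), !C_n_n by lia. ring.
  - rewrite (proj2 (Nat.leb_gt j n)), (proj2 (Nat.leb_gt (S j) n)) by lia. ring.
Qed.

Lemma fsum_Pascal_cpow n N x :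
  (n < N)%nat -> fsum (fun j => Pascal n j * cpow x j) N = cpow (x + 1) n.
Proof.
  revert N. induction n as [|n IH]; intros N HN.
  - rewrite (fsum_single _ N 0%nat); [rewrite Pascal_0; simpl; ring | lia |].
    intros j Hj. rewrite Pascal_above by lia. ring.
  - destruct N as [|N]; [lia |]. rewrite fsum_incr_1.
    rewrite (fsum_ext _ (fun j => x * (Pascal n j * cpow x j) + Pascal n (S j) * cpow x (S j)))
      by (intros; rewrite Pascal_succ; simpl; ring).
    rewrite fsum_plus, fsum_scal_l, IH by lia.
    pose proof (IH (S N) ltac:(lia)) as Hrow. rewrite fsum_incr_1 in Hrow.
    rewrite !Pascal_0 in *. simpl in *. rewrite <- Hrow. ring.
Qed.

Lemma smulv_Pascal_Xv x n : smulv Pascal (Xv x) n = Xv (x + 1) n.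
Proof.
  rewrite (smulv_fsum Pascal _ n (S n)).
  - apply fsum_Pascal_cpow. lia.
  - intros j Hj. apply Pascal_above. lia.
Qed.

Lemma leb_double s t : (2 * s <=? 2 * t)%nat = (s <=? t)%nat.
Proof. destruct (Nat.leb_spec s t); [apply Nat.leb_le | apply Nat.leb_gt]; lia. Qed.

Lemma leb_double_1 s t : (2 * s + 1 <=? 2 * t + 1)%nat = (s <=? t)%nat.
Proof. destruct (Nat.leb_spec s t); [apply Nat.leb_le | apply Nat.leb_gt]; lia. Qed.

Lemma Pascal1_above i j : (i < j)%nat -> Pascal1 i j = 0.
Proof.
  intros Hij. unfold Pascal1.
  rewrite (proj2 (Nat.leb_gt j i)), Bool.andb_false_r by lia. reflexivity.
Qed.

Lemma Pascal2_above i j : (i < j)%nat -> Pascal2 i j = 0.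
Proof.
  intros Hij. unfold Pascal2.
  rewrite (proj2 (Nat.leb_gt j i)), Bool.andb_false_r by lia. reflexivity.
Qed.

Lemma upper_banded_Pascal1 : upper_banded Pascal1.
Proof. exists 0%nat. intros i j Hj. apply Pascal1_above. lia. Qed.

Lemma upper_banded_Pascal2 : upper_banded Pascal2.
Proof. exists 0%nat. intros i j Hj. apply Pascal2_above. lia. Qed.

Lemma smulv_Pascal1_even v t : smulv Pascal1 v (2 * t) = smulv Pascal (fun s => v (2 * s)%nat) t.
Proof.
  rewrite (smulv_fsum Pascal1 _ _ (2 * S t)), (smulv_fsum Pascal _ _ (S t)), fsum_double.
  - apply fsum_ext. intros s _. unfold Pascal1, Pascal.
    rewrite !Nat.even_even, Nat.even_odd, leb_double, !Nat.div2_double. simpl. ring.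
  - intros s Hs. apply Pascal_above. lia.
  - intros j Hj. apply Pascal1_above. lia.
Qed.

Lemma smulv_Pascal1_odd v t : smulv Pascal1 v (2 * t + 1) = 0.
Proof.
  rewrite (smulv_fsum Pascal1 _ _ 0); [reflexivity |].
  intros j _. unfold Pascal1. rewrite Nat.even_odd. reflexivity.
Qed.

Lemma smulv_Pascal2_odd v t :
  smulv Pascal2 v (2 * t + 1) = smulv Pascal (fun s => v (2 * s + 1)%nat) t.
Proof.
  rewrite (smulv_fsum Pascal2 _ _ (2 * S t)), (smulv_fsum Pascal _ _ (S t)), fsum_double.
  - apply fsum_ext. intros s _. unfold Pascal2, Pascal.
    rewrite Nat.even_even, !Nat.even_odd, leb_double_1, !Nat.div2_odd'. simpl. ring.
  - intros s Hs. apply Pascal_above. lia.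
  - intros j Hj. apply Pascal2_above. lia.
Qed.

Lemma smulv_Pascal2_even v t : smulv Pascal2 v (2 * t) = 0.
Proof.
  rewrite (smulv_fsum Pascal2 _ _ 0); [reflexivity |].
  intros j _. unfold Pascal2. rewrite Nat.even_even. reflexivity.
Qed.

Lemma X1v_even x t : X1v x (2 * t) = Xv x t.
Proof. unfold X1v. rewrite Nat.even_even, Nat.div2_double. reflexivity. Qed.

Lemma X1v_odd x t : X1v x (2 * t + 1) = 0.
Proof. unfold X1v. rewrite Nat.even_odd. reflexivity. Qed.

Lemma X2v_even x t : X2v x (2 * t) = 0.
Proof. unfold X2v. rewrite Nat.even_even. reflexivity. Qed.

Lemma X2v_odd x t : X2v x (2 * t + 1) = Xv x t.
Proof. unfold X2v. rewrite Nat.even_odd, Nat.div2_odd'. reflexivity. Qed.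

Lemma smulv_Pascal1_X1v x i : smulv Pascal1 (X1v x) i = X1v (x + 1) i.
Proof.
  destruct (Nat.Even_or_Odd i) as [[t ->] | [t ->]].
  - rewrite smulv_Pascal1_even, X1v_even, <- smulv_Pascal_Xv.
    apply smulv_ext. intros s. apply X1v_even.
  - rewrite smulv_Pascal1_odd, X1v_odd. reflexivity.
Qed.

Lemma smulv_Pascal1_X2v x i : smulv Pascal1 (X2v x) i = 0.
Proof.
  destruct (Nat.Even_or_Odd i) as [[t ->] | [t ->]].
  - rewrite smulv_Pascal1_even, <- (smulv_zero_r Pascal t).
    apply smulv_ext. intros s. apply X2v_even.
  - apply smulv_Pascal1_odd.
Qed.

Lemma smulv_Pascal2_X1v x i : smulv Pascal2 (X1v x) i = 0.
Proof.
  destruct (Nat.Even_or_Odd i) as [[t ->] | [t ->]].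
  - apply smulv_Pascal2_even.
  - rewrite smulv_Pascal2_odd, <- (smulv_zero_r Pascal t).
    apply smulv_ext. intros s. apply X1v_odd.
Qed.

Lemma smulv_Pascal2_X2v x i : smulv Pascal2 (X2v x) i = X2v (x + 1) i.
Proof.
  destruct (Nat.Even_or_Odd i) as [[t ->] | [t ->]].
  - rewrite smulv_Pascal2_even, X2v_even. reflexivity.
  - rewrite smulv_Pascal2_odd, X2v_odd, <- smulv_Pascal_Xv.
    apply smulv_ext. intros s. apply X2v_odd.
Qed.

Definition pearson_factor (s1 s2 : cpoly) : smat :=
  sadd (smul Pascal1 (speval s1 Lam1)) (smul Pascal2 (speval s2 Lam2)).

Lemma upper_banded_pearson_factor (s1 s2 : cpoly) : upper_banded (pearson_factor s1 s2).
Proof.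
  unfold pearson_factor.
  auto using upper_banded_sadd, upper_banded_smul, upper_banded_speval, upper_banded_Pascal1,
    upper_banded_Pascal2, upper_banded_Lam1, upper_banded_Lam2.
Qed.

Lemma smulv_pearson_factor (s1 s2 : cpoly) (x c1 c2 : C) (m : nat) :
  smulv (pearson_factor s1 s2) (fun j => c1 * X1v x j + c2 * X2v x j) m
  = peval s1 x * c1 * X1v (x + 1) m + peval s2 x * c2 * X2v (x + 1) m.
Proof.
  assert (HL1 : upper_banded (speval s1 Lam1)) by apply upper_banded_speval, upper_banded_Lam1.
  assert (HL2 : upper_banded (speval s2 Lam2)) by apply upper_banded_speval, upper_banded_Lam2.
  unfold pearson_factor.
  rewrite smulv_sadd, !smulv_smul
    by auto using upper_banded_smul, upper_banded_Pascal1, upper_banded_Pascal2.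
  rewrite (smulv_ext Pascal1 _ (fun j => peval s1 x * c1 * X1v x j + peval s1 0 * c2 * X2v x j)).
  2: { intros j.
       rewrite smulv_lin, (smulv_speval_eigen Lam1 (X1v x) x), (smulv_speval_eigen Lam1 (X2v x) 0);
       auto using upper_banded_Lam1, smulv_Lam1_X1v.
       - ring.
       - intros n. rewrite smulv_Lam1_X2v. ring. }
  rewrite (smulv_ext Pascal2 _ (fun j => peval s2 0 * c1 * X1v x j + peval s2 x * c2 * X2v x j)).
  2: { intros j.
       rewrite smulv_lin, (smulv_speval_eigen Lam2 (X1v x) 0), (smulv_speval_eigen Lam2 (X2v x) x);
       auto using upper_banded_Lam2, smulv_Lam2_X2v.
       - ring.
       - intros n. rewrite smulv_Lam2_X1v. ring. }
  rewrite !smulv_lin, smulv_Pascal1_X1v, smulv_Pascal1_X2v, smulv_Pascal2_X1v, smulv_Pascal2_X2v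
    by auto using upper_banded_Pascal1, upper_banded_Pascal2.
  ring.
Qed.

(** * Series of rank-one matrices *)

Definition rank1_series (u w : nat -> nat -> C) : smat :=
  fun n m => csum (fun k => u k n * w k m).

Lemma rank1_series_ext (u w u' w' : nat -> nat -> C) :
  (forall k n m, u k n * w k m = u' k n * w' k m) -> rank1_series u w = rank1_series u' w'.
Proof.
  intros H. apply functional_extensionality; intros n. apply functional_extensionality; intros m.
  apply csum_ext. auto.
Qed.

Lemma rank1_series_incr_1 (u w : nat -> nat -> C) :
  (forall n m, ex_csum (fun k => u k n * w k m)) -> (forall n, u 0%nat n = 0) ->
  rank1_series u w = rank1_series (fun k => u (S k)) (fun k => w (S k)).
Proof.
  intros Hsum Hu0.
  apply functional_extensionality; intros n. apply functional_extensionality; intros m.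
  unfold rank1_series. rewrite csum_incr_1, Hu0 by apply Hsum. ring.
Qed.

Section Rank1SeriesProducts.

Variables (u w : nat -> nat -> C).
Hypothesis Hsum : forall n m, ex_csum (fun k => u k n * w k m).

Lemma smul_rank1_series_entry A n m : upper_banded A ->
  smul A (rank1_series u w) n m = csum (fun k => smulv A (u k) n * w k m)
  /\ ex_csum (fun k => smulv A (u k) n * w k m).
Proof.
  intros [a HA]. set (N := (n + a + 1)%nat).
  assert (HAn : forall j, (N <= j)%nat -> A n j = 0) by (intros; apply HA; lia).
  assert (Hk : forall k, fsum (fun j => A n j * (u k j * w k m)) N = smulv A (u k) n * w k m).
  { intros k. rewrite (smulv_fsum A _ n N HAn), <- fsum_scal_r. apply fsum_ext. intros; ring. }
  split.
  - unfold smul, rank1_series. rewrite (csum_fin _ N) by (intros j Hj; rewrite HAn by lia; ring).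
    rewrite (csum_fsum_scal (fun j => A n j) (fun j k => u k j * w k m)) by auto.
    apply csum_ext. exact Hk.
  - apply (ex_csum_ext _ _ Hk), (ex_csum_fsum (fun j k => A n j * (u k j * w k m))).
    intros j. apply ex_csum_scal_l, Hsum.
Qed.

Variables (A : smat) (u' : nat -> nat -> C).
Hypothesis (HA : upper_banded A) (Hu' : forall k n, smulv A (u k) n = u' k n).

Lemma smul_rank1_series_l : smul A (rank1_series u w) = rank1_series u' w.
Proof.
  apply functional_extensionality; intros n. apply functional_extensionality; intros m.
  rewrite (proj1 (smul_rank1_series_entry A n m HA)).
  apply csum_ext. intros k. rewrite Hu'. reflexivity.
Qed.

Lemma ex_csum_rank1_series_l n m : ex_csum (fun k => u' k n * w k m).
Proof.
  apply (ex_csum_ext (fun k => smulv A (u k) n * w k m)); [intros k; rewrite Hu'; reflexivity |].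
  apply (smul_rank1_series_entry A n m HA).
Qed.

End Rank1SeriesProducts.

Lemma smul_rank1_series_r (B : smat) (u w w' : nat -> nat -> C) :
  upper_banded B -> (forall k m, smulv B (w k) m = w' k m) ->
  (forall n m, ex_csum (fun k => u k n * w k m)) ->
  smul (rank1_series u w) (strans B) = rank1_series u w'.
Proof.
  intros [b HB] Hw' Hsum.
  apply functional_extensionality; intros n. apply functional_extensionality; intros m.
  set (N := (m + b + 1)%nat).
  assert (HBm : forall j, (N <= j)%nat -> B m j = 0) by (intros; apply HB; lia).
  unfold smul, rank1_series, strans.
  rewrite (csum_ext _ (fun j => B m j * csum (fun k => u k n * w k j)))
    by (intros; apply Cmult_comm).
  rewrite (csum_fin _ N) by (intros j Hj; rewrite HBm by lia; ring).
  rewrite (csum_fsum_scal (fun j => B m j) (fun j k => u k n * w k j)) by auto.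
  apply csum_ext. intros k. rewrite <- Hw', (smulv_fsum B _ m N HBm), <- fsum_scal_l.
  apply fsum_ext. intros; ring.
Qed.

Definition weight_vec (w1 w2 : nat -> C) (k : nat) : nat -> C :=
  fun m => w1 k * X1v (natC k) m + w2 k * X2v (natC k) m.

Lemma moment_rank1_series w1 w2 :
  moment w1 w2 = rank1_series (fun k => Xv (natC k)) (weight_vec w1 w2).
Proof. reflexivity. Qed.

Lemma natC_S k : natC (S k) = natC k + 1.
Proof. unfold natC. rewrite S_INR, RtoC_plus. reflexivity. Qed.

Theorem mainTheorem5 (w1 w2 : nat -> C) (theta sigma1 sigma2 : cpoly) :
  (forall n m : nat, ex_series (fun k => Cmod (moment_term w1 w2 n m k))) ->
  peval theta 0 = 0 ->
  (forall k : nat, peval theta (natC (S k)) * w1 (S k) = peval sigma1 (natC k) * w1 k) ->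
  (forall k : nat, peval theta (natC (S k)) * w2 (S k) = peval sigma2 (natC k) * w2 k) ->
  smul (speval theta Lam) (moment w1 w2) =
  smul (smul Pascal (moment w1 w2))
    (strans (sadd (smul Pascal1 (speval sigma1 Lam1))
                  (smul Pascal2 (speval sigma2 Lam2)))).
Proof.
  intros Habs Htheta0 Hw1 Hw2.
  fold (pearson_factor sigma1 sigma2). rewrite moment_rank1_series.
  set (X := fun k => Xv (natC k)). set (W := weight_vec w1 w2).
  set (thetaX := fun k n => peval theta (natC k) * X k n).
  set (X' := fun k => Xv (natC k + 1)).
  set (W' := fun k m => peval sigma1 (natC k) * w1 k * X1v (natC k + 1) m
                        + peval sigma2 (natC k) * w2 k * X2v (natC k + 1) m).
  assert (Hsum : forall n m, ex_csum (fun k => X k n * W k m))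
    by (intros; apply ex_csum_Cmod, Habs).
  assert (Htheta : upper_banded (speval theta Lam)) by apply upper_banded_speval, upper_banded_Lam.
  assert (HthetaX : forall k n, smulv (speval theta Lam) (X k) n = thetaX k n)
    by (intros; apply smulv_speval_eigen; [apply upper_banded_Lam | intros; apply smulv_Lam_Xv]).
  assert (HPascal : forall k n, smulv Pascal (X k) n = X' k n) by (intros; apply smulv_Pascal_Xv).
  assert (HW' : forall k m, smulv (pearson_factor sigma1 sigma2) (W k) m = W' k m)
    by (intros; apply smulv_pearson_factor).
  rewrite (smul_rank1_series_l X W Hsum _ thetaX Htheta HthetaX),
    (smul_rank1_series_l X W Hsum _ X' upper_banded_Pascal HPascal),
    (smul_rank1_series_r _ X' W W' (upper_banded_pearson_factor sigma1 sigma2) HW'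
       (ex_csum_rank1_series_l X W Hsum _ X' upper_banded_Pascal HPascal)),
    (rank1_series_incr_1 thetaX W (ex_csum_rank1_series_l X W Hsum _ thetaX Htheta HthetaX)).
  - apply rank1_series_ext. intros k n m. unfold thetaX, X, X', W, W', weight_vec.
    rewrite <- Hw1, <- Hw2, natC_S. ring.
  - intros n. unfold thetaX. change (natC 0) with (RtoC 0). rewrite Htheta0. ring.
Qed.
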